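(* Let $n\ge2$ and let $\mathcal{S}=\{\mathbf{s}\in\mathbb{R}^n:\tfrac12\mathbf{s}^TA\mathbf{s}+\mathbf{b}^T\mathbf{s}+c=0\}$, where $A$ is a nonzero real symmetric $n\times n$ matrix, $\mathbf{b}\in\mathbb{R}^n$, $c\in\mathbb{R}$. Suppose $\mathcal{S}$ does not contain a line but contains at least two points. Then $\operatorname{rk}(A\,|\,\mathbf{b})=n$, and $\mathcal{S}$ is a rationally parameterisable hypersurface up to an exceptional set of hypersurface measure zero, i.e. there are a map $\boldsymbol{\sigma}:\mathbb{R}^{n-1}\to\mathbb{R}^n$ with rational components and a set $D\subseteq\mathbb{R}^{n-1}$ on which they are defined such that $\{\boldsymbol{\sigma}(\mathbf{t}):\mathbf{t}\in D\}\subseteq\mathcal{S}$ and its complement in $\mathcal{S}$ has hypersurface measure zero.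
   Context: $(A\,|\,\mathbf{b})$ is the $n\times(n+1)$ matrix obtained by appending the column $\mathbf{b}$ to $A$. *)

From HB Require Import structures.
From mathcomp Require Import all_boot all_order all_algebra.
From mathcomp Require Import all_classical all_reals all_analysis.
From mathcomp Require mpoly.
Set Implicit Arguments. Unset Strict Implicit. Unset Printing Implicit Defensive.
Import Order.TTheory GRing.Theory Num.Theory.
Local Open Scope classical_set_scope.
Local Open Scope ring_scope.

Definition quad_form (R : realType) (n : nat) (A : 'M[R]_n) (b : 'cV[R]_n) (c : R)
  (s : 'cV[R]_n) : R :=
  2^-1 * (s^T *m A *m s) ord0 ord0 + (b^T *m s) ord0 ord0 + c.

Definition quadric (R : realType) (n : nat) (A : 'M[R]_n) (b : 'cV[R]_n) (c : R)
  : set 'cV[R]_n := [set s | quad_form A b c s = 0].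

Definition contains_line (R : realType) (n : nat) (S : set 'cV[R]_n) : Prop :=
  exists (p d : 'cV[R]_n), d != 0 /\ forall t : R, S (p + t *: d).

Definition edist (R : realType) (n : nat) (x y : 'cV[R]_n) : R :=
  Num.sqrt (\sum_(i < n) (x i ord0 - y i ord0) ^+ 2).

(* E has s-dimensional Hausdorff measure zero (w.r.t. the Euclidean metric):
   H^s(E) = sup_delta H^s_delta(E) = 0, i.e. for every delta > 0 and eps > 0 there
   is a countable cover (U_k) of E with diam U_k <= r_k <= delta and
   sum_k r_k^s < eps.  ("diam U <= r" is written out as: all pairwise
   distances in U are <= r.) *)
Definition hausdorff_null (R : realType) (n s : nat) (E : set 'cV[R]_n) : Prop :=
  forall delta eps : R, 0 < delta -> 0 < eps ->
  exists (U : nat -> set 'cV[R]_n) (r : nat -> R),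
    (forall k, 0 <= r k <= delta) /\
    (forall k x y, U k x -> U k y -> edist x y <= r k) /\
    E `<=` \bigcup_k U k /\
    (\sum_(k <oo) ((r k ^+ s)%:E) < eps%:E)%E.

Definition mpeval (R : realType) (m : nat) (p : mpoly.mpoly m R) (t : 'cV[R]_m) : R :=
  mpoly.meval (fun i => t i ord0) p.

Definition rat_map (R : realType) (m n : nat) (p q : 'I_n -> mpoly.mpoly m R)
  (t : 'cV[R]_m) : 'cV[R]_n :=
  \col_(i < n) (mpeval (p i) t / mpeval (q i) t).

From Pilot Require Import Defs.
From HB Require Import structures.
From mathcomp Require Import all_boot all_order all_algebra.
From mathcomp Require Import all_classical all_reals all_analysis.
From mathcomp Require mpoly.
From mathcomp Require Import ring lra.
Set Implicit Arguments.
Unset Strict Implicit.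
Unset Printing Implicit Defensive.
Import Order.TTheory GRing.Theory Num.Theory.
Local Open Scope classical_set_scope.
Local Open Scope ring_scope.

(* A quadric without lines through one of its points x is met by almost every
   line through x in exactly one further point.  Sending a direction to that
   second intersection point, and parameterising directions by inverse
   stereographic projection t |-> (2 t, |t|^2 - 1), gives a rational
   parameterisation of the quadric that misses at most the point x itself.
   The rank statement holds because a kernel vector of (A | b) would be a
   direction along which the quadric is invariant under translation. *)

Canonical mpoly.mpoly_meval__canonical__Algebra_Additive.
Canonical mpoly.mpoly_meval__canonical__GRing_RMorphism.
Canonical mpoly.mpoly_mpoly__canonical__Algebra_AddUMagma.
Canonical mpoly.mpoly_mpoly__canonical__Algebra_BaseZmodule.
Canonical mpoly.mpoly_mpoly__canonical__GRing_LSemiModule.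
Canonical mpoly.mpoly_mpoly__canonical__GRing_PzRing.
Canonical mpoly.mpoly_mpoly__canonical__GRing_PzSemiRing.

Section Forms.
Variables (R : comNzRingType) (n : nat).
Implicit Types (u v w : 'cV[R]_n) (A : 'M[R]_n).

Definition vdot u v : R := (u^T *m v) ord0 ord0.
Definition bform A u v : R := vdot u (A *m v).

Lemma vdotE u v : vdot u v = \sum_i u i ord0 * v i ord0.
Proof. by rewrite /vdot mxE; apply: eq_bigr => i _; rewrite mxE. Qed.

Lemma vdotC u v : vdot u v = vdot v u.
Proof. by rewrite !vdotE; apply: eq_bigr => i _; rewrite mulrC. Qed.

Lemma vdotDr u v w : vdot u (v + w) = vdot u v + vdot u w.
Proof. by rewrite /vdot mulmxDr mxE. Qed.

Lemma vdotr0 u : vdot u 0 = 0.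
Proof. by rewrite /vdot mulmx0 mxE. Qed.

Lemma vdotDl u v w : vdot (u + v) w = vdot u w + vdot v w.
Proof. by rewrite !(vdotC _ w) vdotDr. Qed.

Lemma vdotZl a u v : vdot (a *: u) v = a * vdot u v.
Proof. by rewrite /vdot linearZ /= -scalemxAl mxE. Qed.

Lemma vdotZr a u v : vdot u (a *: v) = a * vdot u v.
Proof. by rewrite !(vdotC u) vdotZl. Qed.

Lemma bformE A u v : bform A u v = (u^T *m A *m v) ord0 ord0.
Proof. by rewrite /bform /vdot mulmxA. Qed.

Lemma bformDl A u v w : bform A (u + v) w = bform A u w + bform A v w.
Proof. exact: vdotDl. Qed.

Lemma bformDr A u v w : bform A u (v + w) = bform A u v + bform A u w.
Proof. by rewrite /bform mulmxDr vdotDr. Qed.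

Lemma bformZl A a u v : bform A (a *: u) v = a * bform A u v.
Proof. exact: vdotZl. Qed.

Lemma bformZr A a u v : bform A u (a *: v) = a * bform A u v.
Proof. by rewrite /bform -scalemxAr vdotZr. Qed.

Lemma bform_sym A u v : A^T = A -> bform A u v = bform A v u.
Proof. by move=> symA; rewrite /bform vdotC /vdot trmx_mul symA mulmxA. Qed.

Lemma bformZZ A a u : bform A (a *: u) (a *: u) = a ^+ 2 * bform A u u.
Proof. by rewrite bformZl bformZr mulrA expr2. Qed.

End Forms.

Section LinesOnQuadric.
Variables (R : realType) (n : nat) (A : 'M[R]_n) (b : 'cV[R]_n) (c : R).
Hypothesis symA : A^T = A.
Local Notation S := (quadric A b c).

Lemma quad_formE s : quad_form A b c s = 2^-1 * bform A s s + vdot b s + c.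
Proof. by rewrite /quad_form -bformE. Qed.

Lemma quad_form_lineD s d l :
  quad_form A b c (s + l *: d) =
  quad_form A b c s + l * vdot d (A *m s + b) + 2^-1 * l ^+ 2 * bform A d d.
Proof.
rewrite !quad_formE bformDl !bformDr !bformZl !bformZr (bform_sym _ d symA).
rewrite !vdotDr vdotZr !(vdotC b) -[vdot d (A *m s)]/(bform A d s).
by field.
Qed.

Lemma rank_row_mx_quadric x :
  ~ contains_line S -> S x -> \rank (row_mx A b) = n.
Proof.
move=> noline Sx; apply/eqP; rewrite eqn_leq rank_leq_row leqNgt; apply/negP => lt_rk.
have /rowV0Pn[v] : kermx (row_mx A b) != 0.
  by rewrite -mxrank_eq0 mxrank_ker subn_eq0 -ltnNge.
rewrite sub_kermx mul_mx_row -row_mx0 => /eqP/eq_row_mx[vA vb] v0.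
have Ad : A *m v^T = 0 by rewrite -symA -trmx_mul vA trmx0.
have db : vdot v^T b = 0 by rewrite /vdot trmxK vb mxE.
apply: noline; exists x, v^T; split.
  by apply: contraNneq v0 => /(congr1 trmx); rewrite trmxK trmx0 => ->.
move=> t; rewrite /quadric /= quad_form_lineD vdotDr db -/(bform A _ x).
by rewrite bform_sym // /bform Ad !vdotr0 [quad_form _ _ _ x]Sx !(mulr0, addr0).
Qed.

(* The second root of quad_form_lineD in l when x lies on S; if d^T A d = 0
   the division returns 0 and the point is x itself. *)
Definition second_intersection x d : 'cV[R]_n :=
  x + (-2 * vdot d (A *m x + b) / bform A d d) *: d.

Lemma quadric_second_intersection x d :
  S x -> bform A d d != 0 -> S (second_intersection x d).
Proof.
rewrite /quadric /= /second_intersection quad_form_lineD => -> Q0.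
by field.
Qed.

Lemma second_intersectionZ x d mu :
  mu != 0 -> second_intersection x (mu *: d) = second_intersection x d.
Proof.
move=> mu0; rewrite /second_intersection bformZZ vdotZl scalerA.
have [->|Q0] := eqVneq (bform A d d) 0; first by rewrite !mulr0 !invr0 !mulr0 !mul0r.
by congr (x + _ *: d); field; rewrite Q0 mu0.
Qed.

Lemma quadric_chord x s : S x -> S s ->
  vdot (s - x) (A *m x + b) = - (2^-1 * bform A (s - x) (s - x)).
Proof.
move=> Sx Ss; have := quad_form_lineD x (s - x) 1.
rewrite scale1r addrC subrK [quad_form _ _ _ s]Ss [quad_form _ _ _ x]Sx.
by rewrite mul1r expr1n mulr1; lra.
Qed.

Lemma chord_anisotropic x s : ~ contains_line S -> S x -> S s -> s != x ->
  bform A (s - x) (s - x) != 0.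
Proof.
move=> noline Sx Ss sx; apply/negP => /eqP Q0; apply: noline.
exists x, (s - x); split; first by rewrite subr_eq0.
move=> l; rewrite /quadric /= quad_form_lineD quadric_chord // Q0 [quad_form _ _ _ x]Sx.
by rewrite !(mulr0, oppr0, addr0).
Qed.

Lemma second_intersection_chord x s : S x -> S s ->
  bform A (s - x) (s - x) != 0 -> second_intersection x (s - x) = s.
Proof.
move=> Sx Ss Q0; rewrite /second_intersection quadric_chord //.
have -> : -2 * - (2^-1 * bform A (s - x) (s - x)) / bform A (s - x) (s - x) = 1.
  by field.
by rewrite scale1r addrC subrK.
Qed.

End LinesOnQuadric.

Section StereographicDirections.
Variables (R : rcfType) (k : nat).

Definition stereo_dir (t : 'cV[R]_k) : 'cV[R]_k.+1 :=
  \col_i match unlift ord_max i with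
         | Some j => 2 * t j ord0
         | None => \sum_j t j ord0 ^+ 2 - 1
         end.

Lemma sum_sqr_col_gt0 (d : 'cV[R]_k.+1) : d != 0 -> 0 < \sum_i d i ord0 ^+ 2.
Proof.
move=> d0; rewrite lt_def sumr_ge0 ?andbT; last by move=> i _; exact: sqr_ge0.
apply: contra d0 => /eqP/psumr_eq0P sum0; apply/eqP/matrixP => i j.
by rewrite (ord1 j) mxE; apply/eqP; rewrite -sqrf_eq0 sum0 // => l _; exact: sqr_ge0.
Qed.

(* For d with last entry d_k <= 0 and r = |d|, the point t = d' / (r - d_k)
   (d' the first k entries) satisfies stereo_dir t = 2/(r - d_k) d. *)
Lemma stereo_dir_onto (d : 'cV[R]_k.+1) :
  d != 0 -> exists t mu, mu != 0 /\ stereo_dir t = mu *: d.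
Proof.
wlog dk_le0 : d / d ord_max ord0 <= 0 => [wlog_d d0|d0].
  have [dk_le0|dk_gt0] := lerP (d ord_max ord0) 0; first exact: wlog_d.
  have [||t [mu [mu0 E]]] := wlog_d (- d); first by rewrite mxE oppr_le0 ltW.
    by rewrite oppr_eq0.
  by exists t, (- mu); rewrite oppr_eq0 E scalerN scaleNr.
pose r := Num.sqrt (\sum_i d i ord0 ^+ 2).
have r_gt0 : 0 < r by rewrite sqrtr_gt0 sum_sqr_col_gt0.
have r2 : r ^+ 2 = \sum_j d (lift ord_max j) ord0 ^+ 2 + d ord_max ord0 ^+ 2.
  rewrite sqr_sqrtr; last by apply: sumr_ge0 => i _; exact: sqr_ge0.
  rewrite big_ord_recr /=; congr (_ + _); apply: eq_bigr => i _.
  by congr (d _ _ ^+ 2); apply: val_inj; rewrite /= /bump leqNgt ltn_ord.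
have rd0 : r - d ord_max ord0 != 0 by rewrite gt_eqF // subr_gt0 (le_lt_trans dk_le0).
exists (\col_j (d (lift ord_max j) ord0 / (r - d ord_max ord0))).
exists (2 / (r - d ord_max ord0)); split; first by rewrite mulf_neq0 ?invr_eq0.
apply/matrixP => i j; rewrite (ord1 j) !mxE.
case: unliftP => [l ->|->]; first by rewrite mxE; field.
under eq_bigr => l _ do rewrite mxE expr_div_n.
rewrite -mulr_suml (_ : \sum_j _ = r ^+ 2 - d ord_max ord0 ^+ 2); last first.
  by rewrite r2; ring.
by field.
Qed.

End StereographicDirections.

Section PolynomialMaps.
Variables (R : realType) (m n : nat).
Implicit Types (P : 'I_n -> mpoly.mpoly m R) (t : 'cV[R]_m).

Definition mpeval_col P t : 'cV[R]_n := \col_i mpeval (P i) t.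

Definition mpoly_vdot P (w : 'cV[R]_n) : mpoly.mpoly m R :=
  \sum_i w i ord0 *: P i.

Definition mpoly_bform (A : 'M[R]_n) P : mpoly.mpoly m R :=
  \sum_i \sum_j A i j *: (P i * P j).

Lemma mpeval_vdot P w t : mpeval (mpoly_vdot P w) t = vdot (mpeval_col P t) w.
Proof.
rewrite vdotE /mpeval raddf_sum; apply: eq_bigr => i _.
by rewrite /= mpoly.mevalZ mxE mulrC.
Qed.

Lemma mpeval_bform A P t :
  mpeval (mpoly_bform A P) t = bform A (mpeval_col P t) (mpeval_col P t).
Proof.
rewrite /bform vdotE /mpeval raddf_sum; apply: eq_bigr => i _.
rewrite raddf_sum !mxE mulr_sumr; apply: eq_bigr => j _.
by rewrite /= mpoly.mevalZ mpoly.mevalM !mxE /mpeval; ring.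
Qed.

Variables (A : 'M[R]_n) (b : 'cV[R]_n) (x : 'cV[R]_n).

Definition second_intersection_num P (i : 'I_n) : mpoly.mpoly m R :=
  x i ord0 *: mpoly_bform A P - 2 *: (mpoly_vdot P (A *m x + b) * P i).

Lemma rat_map_second_intersection P t : mpeval (mpoly_bform A P) t != 0 ->
  rat_map (second_intersection_num P) (fun=> mpoly_bform A P) t =
  second_intersection A b x (mpeval_col P t).
Proof.
rewrite mpeval_bform => Q0; apply/matrixP => i j.
rewrite (ord1 j) /rat_map /second_intersection !mxE /second_intersection_num.
rewrite /mpeval mpoly.mevalB !mpoly.mevalZ mpoly.mevalM -!/(mpeval _ t).
rewrite mpeval_vdot mpeval_bform.
by field.
Qed.

End PolynomialMaps.

Definition stereo_poly (R : realType) (k : nat) (i : 'I_k.+1) : mpoly.mpoly k R :=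
  match unlift ord_max i with
  | Some j => 2 *: mpoly.mpolyX R (mpoly.mnm1 j)
  | None => \sum_j mpoly.mpolyX R (mpoly.mnm1 j) ^+ 2 - 1
  end.

Lemma mpeval_col_stereo (R : realType) (k : nat) (t : 'cV[R]_k) :
  mpeval_col (@stereo_poly R k) t = stereo_dir t.
Proof.
apply/matrixP => i j; rewrite (ord1 j) !mxE /stereo_poly /mpeval.
case: unlift => [l|]; first by rewrite mpoly.mevalZ mpoly.mevalXU.
rewrite mpoly.mevalB mpoly.meval1 raddf_sum; congr (_ - _); apply: eq_bigr => l _.
by rewrite /= rmorphXn /= mpoly.mevalXU.
Qed.

Lemma hausdorff_null_subset1 (R : realType) (n s : nat) (x : 'cV[R]_n) (E : set 'cV[R]_n) :
  (0 < s)%N -> E `<=` [set x] -> hausdorff_null s E.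
Proof.
move=> s_gt0 Ex delta eps delta_gt0 eps_gt0.
exists (fun=> [set x]), (fun=> 0); split; [|split; [|split]].
- by move=> _; rewrite lexx ltW.
- move=> _ u v -> ->; rewrite /Defs.edist big1 ?sqrtr0 // => i _.
  by rewrite subrr expr0n.
- by move=> u /Ex ->; exists 0%N.
- by rewrite eseries0 ?lte_fin // => i _ _; rewrite expr0n gtn_eqF.
Qed.

Section RationalParameterisation.
Variables (R : realType) (k : nat) (A : 'M[R]_k.+1) (b : 'cV[R]_k.+1) (c : R).
Variable x : 'cV[R]_k.+1.
Hypotheses (symA : A^T = A) (noline : ~ contains_line (quadric A b c)).
Hypothesis Sx : quadric A b c x.
Local Notation S := (quadric A b c).
Local Notation p := (second_intersection_num A b x (@stereo_poly R k)).
Local Notation q := (fun=> mpoly_bform A (@stereo_poly R k)).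
Local Notation D := [set t | mpeval (mpoly_bform A (@stereo_poly R k)) t != 0].

Lemma rat_map_stereo t : D t -> rat_map p q t = second_intersection A b x (stereo_dir t).
Proof. by move=> Dt; rewrite rat_map_second_intersection // mpeval_col_stereo. Qed.

Lemma quadric_rat_map_stereo t : D t -> S (rat_map p q t).
Proof.
move=> Dt; rewrite rat_map_stereo //; apply: quadric_second_intersection => //.
by move: Dt; rewrite /= mpeval_bform mpeval_col_stereo.
Qed.

Lemma quadric_setD_rat_map_stereo_subset1 : S `\` (rat_map p q @` D) `<=` [set x].
Proof.
move=> s [Ss s_notin]; apply/eqP/negPn/negP => sx; apply: s_notin.
have Q0 := chord_anisotropic symA noline Sx Ss sx.
have [t [mu [mu0 Et]]] : exists t mu, mu != 0 /\ stereo_dir t = mu *: (s - x).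
  by apply: stereo_dir_onto; rewrite subr_eq0.
have Dt : D t.
  by rewrite /= mpeval_bform mpeval_col_stereo Et bformZZ mulf_neq0 ?expf_neq0.
exists t => //; rewrite rat_map_stereo // Et second_intersectionZ //.
by rewrite (second_intersection_chord symA Sx Ss Q0).
Qed.

End RationalParameterisation.

Theorem lemma3 (R : realType) (n : nat) (A : 'M[R]_n) (b : 'cV[R]_n) (c : R) :
  (2 <= n)%N -> A^T = A -> A != 0 ->
  ~ contains_line (quadric A b c) ->
  (exists x y : 'cV[R]_n, x != y /\ quadric A b c x /\ quadric A b c y) ->
  \rank (row_mx A b) = n /\
  exists (p q : 'I_n -> mpoly.mpoly n.-1 R) (D : set 'cV[R]_(n.-1)),
    (forall t, D t -> forall i, mpeval (q i) t != 0) /\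
    (forall t, D t -> quadric A b c (rat_map p q t)) /\
    hausdorff_null n.-1 (quadric A b c `\` (rat_map p q @` D)).
Proof.
(* One point of S suffices, and A != 0 is implied by the absence of lines. *)
move=> n_ge2 symA _ noline [x [_ [_ [Sx _]]]].
split; first exact: (rank_row_mx_quadric symA noline Sx).
case: n n_ge2 A b c symA noline x Sx => [|[|k]] // _ A b c symA noline x Sx.
pose P := @stereo_poly R k.+1.
exists (second_intersection_num A b x P), (fun=> mpoly_bform A P).
exists [set t | mpeval (mpoly_bform A P) t != 0].
split; first by [].
split; first exact: quadric_rat_map_stereo.
exact: hausdorff_null_subset1 (quadric_setD_rat_map_stereo_subset1 symA noline Sx).
Qed.
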